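(* Fix an integer $k\geq1$ and $V=\{0,\ldots,k\}$. If a Boolean function $\varphi$ on $V$ is fragmentable, then $\mathrm{eul}(\varphi)=0$.
   Context: A valuation is a subset $\nu\subseteq V$; $\nu^{(l)}$ is $\nu$ with membership of $l$ flipped. A Boolean function on $V$ is a map $\varphi:2^V\to\{\text{false},\text{true}\}$; $\mathrm{eul}(\varphi)=\sum_{\nu:\varphi(\nu)=\text{true}}(-1)^{|\nu|}$. $\varphi$ is degenerate if there is $l\in V$ with $\varphi(\nu)=\varphi(\nu^{(l)})$ for all $\nu$. Two functions are disjoint if no valuation satisfies both. A $\neg$-$\vee$-template is a Boolean circuit all of whose internal gates are $\neg$- or $\vee$-gates (a single leaf is allowed); its leaves $l_0,\ldots,l_n$ are holes. $T[\varphi_0,\ldots,\varphi_n]$ is the function obtained by substituting $\varphi_i$ for $l_i$; it is deterministic if, for every $\vee$-gate of the template, any two distinct inputs compute disjoint functions. $\varphi$ is fragmentable if there exist a $\neg$-$\vee$-template $T$ and degenerate functions $\varphi_0,\ldots,\varphi_n$ (one per hole) such that $T[\varphi_0,\ldots,\varphi_n]$ is deterministic and equivalent to $\varphi$. *)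

From mathcomp Require Import all_boot all_order all_algebra.
Set Implicit Arguments. Unset Strict Implicit. Unset Printing Implicit Defensive.
Import GRing.Theory Num.Theory.

(* The variable set V = {0,...,k} is 'I_k.+1; a valuation is a subset of V. *)
Definition valuation (k : nat) := {set 'I_k.+1}.

Definition bfun (k : nat) := valuation k -> bool.

Definition flipv (k : nat) (nu : valuation k) (l : 'I_k.+1) : valuation k :=
  if l \in nu then nu :\ l else l |: nu.

Definition eul (k : nat) (phi : bfun k) : int :=
  (\sum_(nu : {set 'I_k.+1} | phi nu) (-1) ^+ #|nu|)%R.

Definition degenerate (k : nat) (phi : bfun k) : Prop :=
  exists l : 'I_k.+1, forall nu : valuation k, phi nu = phi (flipv nu l).

Definition disjoint_fun (k : nat) (phi psi : bfun k) : Prop :=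
  forall nu : valuation k, ~~ (phi nu && psi nu).

(* A not-or template, presented as a formula tree; leaves are holes, indexed
   by natural numbers (a hole index may be used at several leaves, modelling
   sharing of a leaf in the circuit). *)
Inductive template : Type :=
| Hole of nat
| NegG of template
| OrG of seq template.

Fixpoint subst (k : nat) (T : template) (f : nat -> bfun k) : bfun k :=
  match T with
  | Hole i => f i
  | NegG T' => fun nu => ~~ subst T' f nu
  | OrG Ts => fun nu => (fix any (l : seq template) : bool :=
                          match l with
                          | [::] => false
                          | T' :: l' => subst T' f nu || any l'
                          end) Ts
  end.

Fixpoint holes (T : template) : seq nat :=
  match T with
  | Hole i => [:: i]
  | NegG T' => holes T'
  | OrG Ts => (fix hs (l : seq template) : seq nat :=
                 match l with
                 | [::] => [::]
                 | T' :: l' => holes T' ++ hs l'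
                 end) Ts
  end.

Fixpoint deterministic (k : nat) (T : template) (f : nat -> bfun k) : Prop :=
  match T with
  | Hole _ => True
  | NegG T' => deterministic T' f
  | OrG Ts =>
      (forall i j : nat, i < size Ts -> j < size Ts -> i <> j ->
         disjoint_fun (subst (nth (Hole 0) Ts i) f) (subst (nth (Hole 0) Ts j) f))
      /\ (fix alld (l : seq template) : Prop :=
            match l with
            | [::] => True
            | T' :: l' => deterministic T' f /\ alld l'
            end) Ts
  end.

Definition fragmentable (k : nat) (phi : bfun k) : Prop :=
  exists (T : template) (f : nat -> bfun k),
    (forall i, i \in holes T -> degenerate (f i)) /\
    deterministic T f /\
    (forall nu : valuation k, subst T f nu = phi nu).

From mathcomp Require Import all_boot all_order all_algebra.
From mathcomp Require Import zify.
From Stdlib Require List.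
Import GRing.Theory Num.Theory.

Set Implicit Arguments.
Unset Strict Implicit.
Unset Printing Implicit Defensive.

(* [eul] behaves like a signed measure: it is additive on disjoint functions,
   and it vanishes on degenerate functions, because flipping the inessential
   variable is a sign-reversing involution on their satisfying valuations.
   In particular [eul] of the constant [true] is 0, so negation changes the
   sign of [eul].  An induction on the template then shows that every
   deterministic substitution of degenerate functions has [eul] equal to 0. *)

Local Open Scope ring_scope.

Section Euler.

Variable k : nat.
Implicit Types (phi psi : bfun k) (nu : valuation k) (l : 'I_k.+1).

Lemma flipvK l : involutive ((@flipv k)^~ l).
Proof.
move=> nu; rewrite {2}/flipv; have [lnu|lNnu] := boolP (l \in nu).
  by rewrite /flipv setD11 setD1K.
by rewrite /flipv setU11 setU1K.
Qed.

Lemma sign_flipv nu l : (-1) ^+ #|flipv nu l| = - (-1) ^+ #|nu| :> int.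
Proof.
rewrite /flipv; case: ifP => lnu.
  by rewrite [in RHS](cardsD1 l nu) lnu exprS mulN1r opprK.
by rewrite cardsU1 lnu exprS mulN1r.
Qed.

Lemma eq_eul phi psi : phi =1 psi -> eul phi = eul psi.
Proof. by move=> eq_phi; apply: eq_bigl => nu; rewrite eq_phi. Qed.

Lemma eul_degenerate phi : degenerate phi -> eul phi = 0.
Proof.
case=> l phi_flip; set S := eul phi.
have S_opp : S = - S.
  rewrite {1}/S /eul (reindex_inj (can_inj (flipvK l))) /= -sumrN.
  by apply: eq_big => nu; rewrite -?phi_flip // sign_flipv.
lia.
Qed.

Lemma eul_orb phi psi : disjoint_fun phi psi ->
  eul (fun nu => phi nu || psi nu) = eul phi + eul psi.
Proof.
move=> dis; rewrite /eul (bigID phi) /=.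
congr (_ + _); apply: eq_bigl => nu /=.
  by case: (phi nu); rewrite ?andbF.
by have := dis nu; case: (phi nu); case: (psi nu).
Qed.

Lemma eul_true : eul (fun _ : valuation k => true) = 0.
Proof. by apply: eul_degenerate; exists ord0. Qed.

Lemma eul_negb phi : eul (fun nu => ~~ phi nu) = - eul phi.
Proof.
have := @eul_orb phi (fun nu => ~~ phi nu) (fun nu => negbT (andbN (phi nu))).
rewrite (@eq_eul _ (fun _ => true)) ?eul_true => [|nu]; last exact: orbN.
lia.
Qed.

Lemma eul_has_disjoint (p0 : bfun k) (ps : seq (bfun k)) :
  (forall i j, (i < size ps)%N -> (j < size ps)%N -> i <> j ->
     disjoint_fun (nth p0 ps i) (nth p0 ps j)) ->
  eul (fun nu => has (fun p => p nu) ps) = \sum_(p <- ps) eul p.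
Proof.
elim: ps => [|p ps IHps] dis /=; first by rewrite big_nil /eul big_pred0.
have dis_ps : disjoint_fun p (fun nu => has (fun q => q nu) ps).
  move=> nu; apply/negP => /andP[p_nu /(has_nthP p0)[j lt_j ps_nu]].
  have /(_ nu) : disjoint_fun p (nth p0 ps j) by apply: (dis 0%N j.+1).
  by rewrite p_nu ps_nu.
rewrite eul_orb // big_cons IHps // => i j lt_i lt_j ne_ij.
by apply: (dis i.+1 j.+1) => // -[].
Qed.

End Euler.

Local Close Scope ring_scope.

(* The automatic [template_ind] gives no induction hypothesis for the
   inputs of an [OrG] gate, which sit inside a list. *)
Fixpoint template_nested_ind (P : template -> Prop)
    (P_hole : forall i, P (Hole i)) (P_neg : forall T, P T -> P (NegG T))
    (P_or : forall Ts, List.Forall P Ts -> P (OrG Ts)) (T : template) : P T :=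
  match T with
  | Hole i => P_hole i
  | NegG T' => P_neg T' (template_nested_ind P_hole P_neg P_or T')
  | OrG Ts => P_or Ts ((fix all_P (l : seq template) : List.Forall P l :=
      match l with
      | [::] => List.Forall_nil P
      | T' :: l' =>
          List.Forall_cons T' (template_nested_ind P_hole P_neg P_or T') (all_P l')
      end) Ts)
  end.

Section Templates.

Variables (k : nat) (f : nat -> bfun k).

Lemma subst_OrG Ts nu : subst (OrG Ts) f nu = has (fun T => subst T f nu) Ts.
Proof. by elim: Ts => //= T Ts ->. Qed.

Lemma holes_OrG Ts T : List.In T Ts -> {subset holes T <= holes (OrG Ts)}.
Proof.
elim: Ts => //= T' Ts IHTs [<-|/IHTs sub] i i_T; rewrite mem_cat ?i_T //.
by rewrite sub ?orbT.
Qed.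

Lemma deterministic_OrG Ts T :
  deterministic (OrG Ts) f -> List.In T Ts -> deterministic T f.
Proof. by case=> _; elim: Ts => //= T' Ts IHTs [det_T' /IHTs det_Ts] [<-|]. Qed.

Lemma eul_subst_OrG Ts : deterministic (OrG Ts) f ->
  eul (subst (OrG Ts) f) = (\sum_(T <- Ts) eul (subst T f))%R.
Proof.
case=> dis _; rewrite -(big_map (fun T => subst T f) predT (@eul k)) -(@eul_has_disjoint _ (f 0)).
  by apply: eq_eul => nu; rewrite subst_OrG has_map.
move=> i j; rewrite size_map => lt_i lt_j.
by rewrite !(nth_map (Hole 0)) //; apply: dis.
Qed.

Lemma eul_subst_degenerate T :
  (forall i, i \in holes T -> degenerate (f i)) -> deterministic T f ->
  eul (subst T f) = 0%R.
Proof.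
elim/template_nested_ind: T => [i|T IHT|Ts /List.Forall_forall IHTs] deg det.
- by apply/eul_degenerate/deg; rewrite mem_seq1.
- by rewrite /= eul_negb IHT ?oppr0.
have eul_Ts T : List.In T Ts -> eul (subst T f) = 0%R.
  move=> T_Ts; apply: IHTs => // [i /(holes_OrG T_Ts)|]; first exact: deg.
  exact: deterministic_OrG det T_Ts.
rewrite eul_subst_OrG //; elim: Ts eul_Ts {IHTs deg det} => [|T Ts IHTs] eul_Ts.
  by rewrite big_nil.
rewrite big_cons eul_Ts ?add0r; last by left.
by apply: IHTs => T' T'_Ts; apply: eul_Ts; right.
Qed.

End Templates.

Theorem proposition4p6 (k : nat) (hk : 1 <= k) (phi : bfun k) :
  fragmentable phi -> eul phi = 0%R.
Proof.
case=> T [f [deg [det subst_phi]]].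
by rewrite -(eul_subst_degenerate deg det); apply: eq_eul.
Qed.
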